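(* Let $L$ be a finite distributive lattice and let $K$ be a cutting of $L$. For every $k\ge0$, $$q_k(L\boxplus K)=q_k(L)+q_k(K)+q_{k-1}(K).$$ In particular, $|L\boxplus K|=|L|+|K|$.
   Context: For a finite poset $P$, $\mathcal{F}(P)$ is the set of filters (up-sets) of $P$ ordered by reverse inclusion; every finite distributive lattice is isomorphic to some $\mathcal{F}(P)$. A cutting of a finite distributive lattice $L$ is an interval $K=[\hat0_K,\hat1_K]$ of $L$ such that every maximal chain of $L$ meets $K$. For a cutting $K$ of $L=\mathcal{F}(P)$, let $S=\hat0_K\setminus\hat1_K$, $S_0$ the set of maximal elements of $P\setminus\hat0_K$, $S_1$ the set of minimal elements of $\hat1_K$. The poset $P_K$ is $P\cup\{x_K\}$ ($x_K$ new) where the order on $P$ is unchanged, $z<x_K$ iff $z\le s$ for some $s\in S_0$, $x_K<y$ iff $y\ge s$ for some $s\in S_1$, and $x_K$ is incomparable to every element of $S$. The convex expansion is $L\boxplus K:=\mathcal{F}(P_K)$. For a finite lattice $M$ and $k\ge0$, $q_k(M)$ is the number of convex sublattices (intervals) of $M$ isomorphic to the Boolean lattice $\mathbf{B}_k$ with $2^k$ elements (so $q_0(M)=|M|$), and $q_{-1}(M)=0$. *)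

From mathcomp Require Import all_boot.
Set Implicit Arguments. Unset Strict Implicit. Unset Printing Implicit Defensive.

(* A finite poset is a finType T with a relation le (partial order assumed in
   the theorem).  Filters (up-sets) of a relation: *)
Definition upclosed (T : finType) (le : rel T) (A : {set T}) : bool :=
  [forall x, forall y, (x \in A) && le x y ==> (y \in A)].

(* F(P): the set of filters; ordered by reverse inclusion. *)
Definition filters (T : finType) (le : rel T) : {set {set T}} :=
  [set A : {set T} | upclosed le A].

Definition revsub (T : finType) : rel {set T} := fun A B => B \subset A.

Definition bool_interval (T : finType) (M : {set T}) (le : rel T) (k : nat)
  (x y : T) : bool :=
  [exists f : {ffun {set 'I_k} -> T},
     [forall A : {set 'I_k}, forall B : {set 'I_k}, (A \subset B) == le (f A) (f B)] &&
     [forall z, ((z \in M) && le x z && le z y) == (z \in codom f)]].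

Definition qk (T : finType) (M : {set T}) (le : rel T) (k : nat) : nat :=
  #|[set p : T * T | [&& p.1 \in M, p.2 \in M, le p.1 p.2 &
                        bool_interval M le k p.1 p.2]]|.

(* q_{k-1} with the convention q_{-1} = 0 (argument is k). *)
Definition qk_pred (T : finType) (M : {set T}) (le : rel T) (k : nat) : nat :=
  if k is k'.+1 then qk M le k' else 0.

(* The interval K = [a0, a1] of L = F(P) (a0 <= a1 in L, i.e. a1 \subset a0). *)
Definition cut_interval (T : finType) (le : rel T) (a0 a1 : {set T})
  : {set {set T}} :=
  [set A in filters le | (a1 \subset A) && (A \subset a0)].

Definition is_chain (T : finType) (le : rel T) (C : {set {set T}}) : Prop :=
  C \subset filters le /\
  forall A B, A \in C -> B \in C -> (A \subset B) || (B \subset A).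

Definition is_max_chain (T : finType) (le : rel T) (C : {set {set T}}) : Prop :=
  is_chain le C /\ forall D, is_chain le D -> C \subset D -> D = C.

Definition cutting (T : finType) (le : rel T) (a0 a1 : {set T}) : Prop :=
  [/\ a0 \in filters le, a1 \in filters le, a1 \subset a0 &
      forall C, is_max_chain le C ->
        exists A, A \in C /\ A \in cut_interval le a0 a1].

Definition S0 (T : finType) (le : rel T) (a0 : {set T}) : {set T} :=
  [set s | (s \notin a0) && [forall t, (t \notin a0) && le s t ==> (t == s)]].
Definition S1 (T : finType) (le : rel T) (a1 : {set T}) : {set T} :=
  [set s | (s \in a1) && [forall t, (t \in a1) && le t s ==> (t == s)]].

(* The poset P_K on option T, None playing the role of the new element x_K. *)
Definition leK (T : finType) (le : rel T) (a0 a1 : {set T}) : rel (option T) :=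
  fun u v =>
    match u, v with
    | Some a, Some b => le a b
    | Some z, None => [exists s in S0 le a0, le z s]
    | None, Some y => [exists s in S1 le a1, le s y]
    | None, None => true
    end.

(* L ⊞ K = F(P_K) (ordered by reverse inclusion). *)
Definition convex_expansion (T : finType) (le : rel T) (a0 a1 : {set T})
  : {set {set option T}} := filters (leK le a0 a1).

From mathcomp Require Import all_boot.
Set Implicit Arguments. Unset Strict Implicit. Unset Printing Implicit Defensive.

(* In L = F(P) an interval [F1, F2] (so F2 ⊆ F1) is Boolean of rank k exactly when
   F1 \ F2 is an antichain with k elements: the filters in between are then the F1 \ U with
   U ⊆ F1 \ F2, while a comparable pair x < y in F1 \ F2 would leave the filter generated
   by y over F2 without a complement.
   Write K = [a0, a1].  As K is a cutting, every filter G satisfies G ⊆ a0 or a1 ⊆ G, and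
   x_K lies above exactly P \ a0 and below exactly a1.  So the filters of P_K are the G ⊆ a0
   and the G + x_K with a1 ⊆ G, and a Boolean interval [F1, F2] of L ⊞ K either avoids x_K
   (a Boolean interval of L with F1 ⊆ a0), contains x_K in F2 (one of L with a1 ⊆ F2), or
   has x_K in F1 \ F2, and then removing x_K leaves a Boolean interval of K of rank k - 1.
   Every Boolean interval of L satisfies F1 ⊆ a0 or a1 ⊆ F2, those satisfying both are the
   Boolean intervals of K, and inclusion-exclusion gives the formula. *)

Lemma eq_bool_interval (T : finType) (M M' : {set T}) (le : rel T) k x y :
  (forall z, le x z -> le z y -> (z \in M) = (z \in M')) ->
  bool_interval M le k x y = bool_interval M' le k x y.
Proof.
move=> eqM; apply: eq_existsb => f; congr (_ && _); apply: eq_forallb => z.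
by case lxz: (le x z); case lzy: (le z y); rewrite ?andbF ?andbT ?eqM.
Qed.

Lemma qk0_revsub (T : finType) (M : {set {set T}}) : qk M (@revsub T) 0 = #|M|.
Proof.
have all0 (A : {set 'I_0}) : A = set0 by apply/setP => -[].
rewrite /qk -(card_imset M (f := fun G => (G, G))) => [|G H [] //].
apply: eq_card => -[G H]; rewrite inE /=.
apply/idP/imsetP => [|[F FM [-> ->]]].
- case/and4P=> GM HM sHG /existsP[f /andP[_ /forallP cod]].
  have in_codom Z : (Z \in M) && revsub G Z && revsub Z H -> Z = f set0.
    by rewrite (eqP (cod Z)) => /codomP[A ->]; rewrite (all0 A).
  have eGH : G = H.
    have -> : G = f set0 by apply: in_codom; rewrite GM sHG /revsub subxx.
    by apply/esym/in_codom; rewrite HM sHG /revsub subxx.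
  by exists G; rewrite -?eGH.
- rewrite FM /revsub subxx /=; apply/existsP; exists [ffun=> F].
  apply/andP; split; apply/forallP=> A.
    by apply/forallP=> B; rewrite !ffunE subxx (all0 A) (all0 B) sub0set.
  apply/eqP; apply/idP/codomP => [/andP[/andP[_ sAF] sFA] | [B ->]].
    by exists set0; rewrite ffunE; apply/eqP; rewrite eqEsubset sAF.
  by rewrite ffunE FM /revsub subxx.
Qed.

Section FilterIntervals.

Variables (T : finType) (le : rel T).

Definition antichain (X : {set T}) : bool :=
  [forall x in X, forall y in X, le x y ==> (x == y)].

Lemma antichainP (X : {set T}) :
  reflect {in X &, forall x y, le x y -> x = y} (antichain X).
Proof.
apply: (iffP forall_inP) => [an x y xX yX lxy | an x xX].
  by apply/eqP; move/forall_inP: (an x xX) => /(_ y yX)/implyP; apply.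
by apply/forall_inP=> y yX; apply/implyP=> /(an x y xX yX)/eqP.
Qed.

Lemma filtersP (A : {set T}) :
  reflect (forall x y, x \in A -> le x y -> y \in A) (A \in filters le).
Proof.
rewrite inE; apply: (iffP forallP) => [upA x y xA lxy | upA x].
  by move/forallP: (upA x) => /(_ y)/implyP; apply; rewrite xA.
by apply/forallP=> y; apply/implyP=> /andP[xA]; apply: upA.
Qed.

Lemma filters_upclosed (A : {set T}) x y :
  A \in filters le -> x \in A -> le x y -> y \in A.
Proof. by move/filtersP; apply. Qed.

Lemma in_cut_interval (F1 F2 G : {set T}) :
  (G \in cut_interval le F1 F2) = [&& G \in filters le, F2 \subset G & G \subset F1].
Proof. by rewrite [LHS]inE. Qed.

Lemma filtersU (A B : {set T}) :
  A \in filters le -> B \in filters le -> A :|: B \in filters le.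
Proof.
move=> /filtersP upA /filtersP upB; apply/filtersP=> x y.
by rewrite !inE => /orP[/upA | /upB] upx /upx ->; rewrite ?orbT.
Qed.

Lemma filtersI (A B : {set T}) :
  A \in filters le -> B \in filters le -> A :&: B \in filters le.
Proof.
move=> /filtersP upA /filtersP upB; apply/filtersP=> x y.
by rewrite !inE => /andP[xA xB] lxy; rewrite (upA x y) ?(upB x y).
Qed.

Lemma filters_between (F1 F2 G : {set T}) :
  F1 \in filters le -> F2 \in filters le -> antichain (F1 :\: F2) ->
  F2 \subset G -> G \subset F1 -> G \in filters le.
Proof.
move=> /filtersP upF1 /filtersP upF2 /antichainP an /subsetP sF2G /subsetP sGF1.
apply/filtersP=> x y xG lxy; have yF1 := upF1 x y (sGF1 x xG) lxy.
have [/sF2G // | yF2] := boolP (y \in F2).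
have xF2 : x \notin F2 by apply: contra yF2 => /upF2; apply.
by rewrite -(an x y) // !inE ?xF2 ?yF2 ?yF1 ?sGF1.
Qed.

Lemma card_cut_interval_antichain (F1 F2 : {set T}) :
  F1 \in filters le -> F2 \in filters le -> F2 \subset F1 -> antichain (F1 :\: F2) ->
  #|cut_interval le F1 F2| = 2 ^ #|F1 :\: F2|.
Proof.
move=> fF1 fF2 sF21 an; rewrite -card_powerset.
have setUK (U : {set T}) : U \subset F1 :\: F2 -> (F2 :|: U) :\: F2 = U.
  by rewrite subsetD => /andP[_ /setDidPl dU]; rewrite setDUl setDv set0U.
rewrite -(card_in_imset (f := setU F2)); last first.
  by move=> U V; rewrite !powersetE => /setUK {2}<- /setUK {2}<- ->.
apply: eq_card => G; rewrite in_cut_interval.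
apply/and3P/imsetP => [[_ sF2G sGF1] | [U]].
  exists (G :\: F2); first by rewrite powersetE setSD.
  by rewrite setDE setUIr setUCr setIT (setUidPr sF2G).
rewrite powersetE => sU ->.
have sUF1 : F2 :|: U \subset F1 by rewrite subUset sF21 (subset_trans sU) ?subsetDl.
by split; rewrite ?subsetUl // (filters_between fF1 fF2 an (subsetUl _ _)).
Qed.

Lemma cut_intervalU (F1 F2 G H : {set T}) :
  G \in cut_interval le F1 F2 -> H \in cut_interval le F1 F2 ->
  G :|: H \in cut_interval le F1 F2.
Proof.
rewrite !in_cut_interval => /and3P[fG sF2G sGF1] /and3P[fH _ sHF1].
by rewrite filtersU // subUset sGF1 sHF1 (subset_trans sF2G) ?subsetUl.
Qed.

Lemma cut_intervalI (F1 F2 G H : {set T}) :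
  G \in cut_interval le F1 F2 -> H \in cut_interval le F1 F2 ->
  G :&: H \in cut_interval le F1 F2.
Proof.
rewrite !in_cut_interval => /and3P[fG sF2G sGF1] /and3P[fH sF2H _].
by rewrite filtersI // subsetI sF2G sF2H (subset_trans _ sGF1) ?subsetIl.
Qed.

Lemma bool_interval_filtersP k (F1 F2 : {set T}) :
  reflect (exists f : {ffun {set 'I_k} -> {set T}},
             (forall A B : {set 'I_k}, (A \subset B) = (f B \subset f A))
             /\ cut_interval le F1 F2 =i codom f)
          (bool_interval (filters le) (@revsub T) k F1 F2).
Proof.
apply: (iffP existsP) => -[f] => [/andP[/forallP iso /forallP cod] | [iso cod]];
  exists f.
  split=> [A B | G]; first exact/eqP/(forallP (iso A) B).
  by rewrite in_cut_interval -(eqP (cod G)) /revsub andbAC -andbA.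
apply/andP; split; apply/forallP.
  by move=> A; apply/forallP=> B; rewrite iso.
by move=> G; rewrite -cod in_cut_interval /revsub andbAC -andbA.
Qed.

Lemma card_cut_interval_bool k (F1 F2 : {set T}) :
  bool_interval (filters le) (@revsub T) k F1 F2 -> #|cut_interval le F1 F2| = 2 ^ k.
Proof.
case/bool_interval_filtersP=> f [iso cod].
have f_inj : injective f by move=> A B eAB; apply/eqP; rewrite eqEsubset !iso eAB subxx.
rewrite (eq_card cod) card_codom //.
by rewrite -cardsT -powersetT card_powerset cardsT card_ord.
Qed.

Lemma bool_interval_compl k (F1 F2 G : {set T}) :
  F1 \in filters le -> F2 \in filters le -> F2 \subset F1 ->
  bool_interval (filters le) (@revsub T) k F1 F2 -> G \in cut_interval le F1 F2 ->
  exists2 C, C \in filters le & (F1 \subset C :|: G) && (C :&: G \subset F2).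
Proof.
move=> fF1 fF2 sF21 /bool_interval_filtersP[f [iso cod]] GI.
have preim H : H \in cut_interval le F1 F2 -> exists A, H = f A.
  by rewrite cod => /codomP.
have f_in A : f A \in cut_interval le F1 F2 by rewrite cod codom_f.
have [A1 eF1] : exists A, F1 = f A by apply: preim; rewrite in_cut_interval fF1 sF21 subxx.
have [A2 eF2] : exists A, F2 = f A by apply: preim; rewrite in_cut_interval fF2 sF21 subxx.
have [A eG] := preim G GI; rewrite eG.
have [B eB] := preim _ (cut_intervalU (f_in (~: A)) (f_in A)).
have [B' eB'] := preim _ (cut_intervalI (f_in (~: A)) (f_in A)).
have B0 : B = set0.
  apply/eqP; rewrite -subset0 -(setICr A) subsetI (iso B A) (iso B (~: A)) -eB.
  by rewrite subsetUl subsetUr.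
have B'T : B' = setT.
  apply/eqP; rewrite eqEsubset subsetT -(setUCr A) subUset (iso A B') (iso (~: A) B').
  by rewrite -eB' subsetIl subsetIr.
exists (f (~: A)); first by move: (f_in (~: A)); rewrite in_cut_interval => /and3P[].
by rewrite eB eB' eF1 eF2 -!iso B0 B'T sub0set subsetT.
Qed.

Hypotheses (le_refl : reflexive le) (le_anti : antisymmetric le) (le_trans : transitive le).

Lemma bool_interval_antichain k (F1 F2 : {set T}) :
  F1 \in filters le -> F2 \in filters le -> F2 \subset F1 ->
  bool_interval (filters le) (@revsub T) k F1 F2 -> antichain (F1 :\: F2).
Proof.
move=> fF1 fF2 sF21 bi; apply/antichainP=> x y.
rewrite !inE => /andP[xF2 xF1] /andP[yF2 yF1] lxy.
pose Hy := F2 :|: [set z in F1 | le y z].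
have HyI : Hy \in cut_interval le F1 F2.
  have upy : [set z in F1 | le y z] \in filters le.
    apply/filtersP=> z w; rewrite !inE => /andP[zF1 lyz] lzw.
    by rewrite (filters_upclosed fF1 zF1 lzw) (le_trans lyz lzw).
  rewrite in_cut_interval filtersU // subsetUl subUset sF21 /=.
  by apply/subsetP=> z; rewrite inE => /andP[].
have [C /filtersP upC /andP[/subsetP sF1CH /subsetP sCHF2]] :=
  bool_interval_compl fF1 fF2 sF21 bi HyI.
apply: le_anti; rewrite lxy /=; have [//|nlyx] := boolP (le y x); case/negP: yF2.
have xC : x \in C.
  by move: (sF1CH x xF1); rewrite /Hy !inE (negbTE xF2) (negbTE nlyx) andbF !orbF.
by apply: sCHF2; rewrite /Hy !inE (upC x y) // yF1 le_refl orbT.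
Qed.

Lemma antichain_bool_interval (F1 F2 : {set T}) :
  F1 \in filters le -> F2 \in filters le -> F2 \subset F1 -> antichain (F1 :\: F2) ->
  bool_interval (filters le) (@revsub T) #|F1 :\: F2| F1 F2.
Proof.
move=> fF1 fF2 sF21 an; set D := F1 :\: F2.
pose e (i : 'I_#|D|) : T := enum_val i.
have e_inj : injective e := @enum_val_inj _ _.
have imset_e (X : {set T}) : e @: [set i | e i \in X] = D :&: X.
  apply/setP=> x; rewrite inE; apply/imsetP/andP => [[i Xi ->] | [xD xX]].
    by rewrite enum_valP; move: Xi; rewrite inE.
  by exists (enum_rank_in xD x); rewrite ?inE /e enum_rankK_in.
have imset_eD (A : {set 'I_#|D|}) : e @: A \subset D.
  by apply/subsetP=> _ /imsetP[i _ ->]; apply: enum_valP.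
apply/bool_interval_filtersP; exists [ffun A : {set 'I_#|D|} => F1 :\: e @: A].
split=> [A B | G].
  rewrite !ffunE; apply/idP/idP => [sAB | sBA]; first by rewrite setDS ?imsetS.
  apply/subsetP=> i iA; rewrite -(mem_imset _ _ e_inj); apply: contraT => eiB.
  have : e i \in F1 :\: e @: B.
    by rewrite inE eiB; move: (enum_valP i); rewrite inE => /andP[].
  by move/(subsetP sBA); rewrite inE imset_f.
rewrite in_cut_interval; apply/and3P/codomP => [[fG sF2G sGF1] | [A ->]].
  exists [set i | e i \in ~: G]; rewrite ffunE imset_e -setDE /D !setDDr setDv set0U.
  by rewrite (setIidPr sF21) (setIidPr sGF1) (setUidPr sF2G).
have sF2 : F2 \subset F1 :\: e @: A.
  apply/subsetP=> x xF2; rewrite inE (subsetP sF21) // andbT.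
  by apply: contraL xF2 => /(subsetP (imset_eD A)); rewrite inE => /andP[].
rewrite ffunE; split=> //; last exact: subsetDl.
by apply: filters_between fF1 fF2 an sF2 (subsetDl _ _).
Qed.

Lemma bool_intervalE k (F1 F2 : {set T}) :
  F1 \in filters le -> F2 \in filters le -> F2 \subset F1 ->
  bool_interval (filters le) (@revsub T) k F1 F2
    = antichain (F1 :\: F2) && (#|F1 :\: F2| == k).
Proof.
move=> fF1 fF2 sF21; apply/idP/andP => [bi | [an /eqP <-]]; last first.
  exact: antichain_bool_interval.
have an := bool_interval_antichain fF1 fF2 sF21 bi; split=> //.
rewrite -(eqn_exp2l _ _ (ltnSn 1)) -card_cut_interval_antichain //.
by rewrite (card_cut_interval_bool bi).
Qed.

Definition boolean_pair k (p : {set T} * {set T}) : bool :=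
  [&& p.1 \in filters le, p.2 \in filters le, p.2 \subset p.1,
      antichain (p.1 :\: p.2) & #|p.1 :\: p.2| == k].

Lemma qk_filters k : qk (filters le) (@revsub T) k = #|[set p | boolean_pair k p]|.
Proof.
apply: eq_card => -[F1 F2]; rewrite [LHS]inE [RHS]inE /revsub /boolean_pair /=.
have [fF1 | //] := boolP (F1 \in filters le); have [fF2 | //] := boolP (F2 \in filters le).
by have [sF21 | //] := boolP (F2 \subset F1); rewrite bool_intervalE.
Qed.

Lemma qk_cut_interval a0 a1 k :
  qk (cut_interval le a0 a1) (@revsub T) k =
  #|[set p | [&& boolean_pair k p, p.1 \subset a0 & a1 \subset p.2]]|.
Proof.
apply: eq_card => -[F1 F2].
rewrite [LHS]inE [RHS]inE !in_cut_interval /revsub /boolean_pair /=.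
have [fF1 | _] := boolP (F1 \in filters le); last by rewrite /= ?andbF.
have [fF2 | _] := boolP (F2 \in filters le); last by rewrite /= ?andbF.
have [sF21 | _] := boolP (F2 \subset F1); last by rewrite /= ?andbF.
have [sF1a0 | _] := boolP (F1 \subset a0); last by rewrite /= ?andbF.
have [sa1F2 | _] := boolP (a1 \subset F2); last by rewrite /= ?andbF.
rewrite -bool_intervalE // (subset_trans sa1F2 sF21) (subset_trans sF21 sF1a0) /=.
rewrite -/(@revsub T) andbT; apply: eq_bool_interval => G sGF1 sF2G.
by rewrite in_cut_interval (subset_trans sa1F2 sF2G) (subset_trans sGF1 sF1a0) !andbT.
Qed.

End FilterIntervals.

Section Maximal.

Variables (T : finType) (le : rel T).
Hypotheses (le_refl : reflexive le) (le_anti : antisymmetric le) (le_trans : transitive le).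

Lemma exists_maximal (X : {pred T}) z : z \in X ->
  exists2 s, le z s & (s \in X) && [forall t, (t \in X) && le s t ==> (t == s)].
Proof.
move=> zX; have zz : (z \in X) && le z z by rewrite zX le_refl.
case: (@arg_maxnP _ z (fun t => (t \in X) && le z t) (fun t => #|[set u | le u t]|) zz)
  => s /andP[sX lzs] s_max.
exists s => //; rewrite sX; apply/forallP=> t; apply/implyP=> /andP[tX lst].
have sub_st : [set u | le u s] \subset [set u | le u t].
  by apply/subsetP=> u; rewrite !inE => /le_trans; apply.
have /eqP/setP/(_ t) : [set u | le u s] == [set u | le u t].
  by rewrite eqEcard sub_st; apply: s_max; rewrite tX (le_trans lzs).
by rewrite !inE le_refl => lts; apply/eqP/le_anti; rewrite lts lst.
Qed.

End Maximal.

Definition chainb (T : finType) (le : rel T) (C : {set {set T}}) : bool :=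
  (C \subset filters le) && [forall A in C, forall B in C, (A \subset B) || (B \subset A)].

Lemma chainbP (T : finType) (le : rel T) C : reflect (is_chain le C) (chainb le C).
Proof.
apply: (iffP andP) => -[sC cmp]; split => //.
  by move=> A B AC BC; move/forall_inP: cmp => /(_ A AC)/forall_inP; apply.
by apply/forall_inP=> A AC; apply/forall_inP=> B BC; apply: cmp.
Qed.

Lemma cutting_dichotomy (T : finType) (le : rel T) (a0 a1 : {set T}) :
  cutting le a0 a1 -> forall G, G \in filters le -> (G \subset a0) || (a1 \subset G).
Proof.
case=> _ _ _ meets G fG.
have chainG : chainb le [set G] && (G \in [set G]).
  rewrite set11 andbT /chainb sub1set fG /=.
  by apply/forall_inP=> A /set1P ->; apply/forall_inP=> B /set1P ->; rewrite subxx.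
case: (@arg_maxnP _ [set G] (fun C => chainb le C && (G \in C)) (fun C => #|C|) chainG)
  => C /andP[chC GC] C_max.
have maxC : is_max_chain le C.
  split=> [|D /chainbP chD sCD]; first exact/chainbP.
  by apply/eqP; rewrite eq_sym eqEcard sCD; apply: C_max; rewrite chD (subsetP sCD).
have [A [AC]] := meets C maxC; rewrite inE => /and3P[_ sa1A sAa0].
case/andP: chC => _ /forall_inP/(_ A AC)/forall_inP/(_ G GC)/orP[sAG | sGA].
  by rewrite (subset_trans sa1A sAG) orbT.
by rewrite (subset_trans sGA sAa0).
Qed.

Section LiftSet.

Variable T : finType.

Definition lift_set (b : bool) (G : {set T}) : {set option T} :=
  [set o | if o is Some x then x \in G else b].

Lemma lift_set_Some b G x : (Some x \in lift_set b G) = (x \in G).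
Proof. by rewrite inE. Qed.

Lemma lift_set_None b G : (None \in lift_set b G) = b.
Proof. by rewrite inE. Qed.

Lemma lift_set_inj b1 b2 G1 G2 : lift_set b1 G1 = lift_set b2 G2 -> b1 = b2 /\ G1 = G2.
Proof.
move=> eG; split; first by rewrite -(lift_set_None b1 G1) eG lift_set_None.
by apply/setP=> x; rewrite -(lift_set_Some b1) eG lift_set_Some.
Qed.

Lemma lift_set_subset b1 b2 G1 G2 :
  (lift_set b2 G2 \subset lift_set b1 G1) = (b2 ==> b1) && (G2 \subset G1).
Proof.
apply/subsetP/andP => [sub | [/implyP sb /subsetP sG] [x|]].
- split; first by apply/implyP=> b2T; have := sub None; rewrite !lift_set_None; apply.
  by apply/subsetP=> x; have := sub (Some x); rewrite !lift_set_Some.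
- by rewrite !lift_set_Some; apply: sG.
- by rewrite !lift_set_None; apply: sb.
Qed.

Lemma lift_setD b1 b2 G1 G2 :
  lift_set b1 G1 :\: lift_set b2 G2 = lift_set (b1 && ~~ b2) (G1 :\: G2).
Proof. by apply/setP=> -[x|]; rewrite !inE // andbC. Qed.

Lemma card_lift_set b G : #|lift_set b G| = #|G| + b.
Proof.
rewrite (cardsD1 None) lift_set_None addnC; congr (_ + _).
have -> : lift_set b G :\ None = Some @: G.
  apply/setP=> -[x|]; rewrite !inE /=; first by rewrite mem_imset //; apply: Some_inj.
  by apply/esym/imsetP=> -[].
by rewrite card_imset //; apply: Some_inj.
Qed.

Definition lift_pair b1 b2 (p : {set T} * {set T}) := (lift_set b1 p.1, lift_set b2 p.2).

Lemma card_lift_pairs (P : pred ({set option T} * {set option T}))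
    (Sff Stt Stf : {set {set T} * {set T}}) :
  (forall b1 b2 p, P (lift_pair b1 b2 p) =
     if b1 then (if b2 then p \in Stt else p \in Stf) else (~~ b2 && (p \in Sff))) ->
  #|[set q | P q]| = #|Sff| + #|Stt| + #|Stf|.
Proof.
move=> Plift.
have lift_inj b1 b2 : injective (lift_pair b1 b2).
  by move=> [G1 G2] [H1 H2] [/lift_set_inj[_ ->] /lift_set_inj[_ ->]].
have mem_lift b1 b2 c1 c2 p (S : {set {set T} * {set T}}) :
    (lift_pair c1 c2 p \in lift_pair b1 b2 @: S) = [&& c1 == b1, c2 == b2 & p \in S].
  apply/imsetP/and3P => [[[H1 H2] HS] | [/eqP -> /eqP -> pS]]; last by exists p.
  by case: p => G1 G2 [/lift_set_inj[-> ->] /lift_set_inj[-> ->]]; rewrite !eqxx.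
have lift_eta (q : {set option T} * {set option T}) :
    q = lift_pair (None \in q.1) (None \in q.2)
                  ([set x | Some x \in q.1], [set x | Some x \in q.2]).
  by case: q => F1 F2; congr pair; apply/setP=> -[x|]; rewrite !inE.
have disj b1 b2 c1 c2 (S S' : {set {set T} * {set T}}) : (b1, b2) != (c1, c2) ->
    lift_pair b1 b2 @: S :&: lift_pair c1 c2 @: S' = set0.
  move=> neq; apply/setP=> q; rewrite in_setI in_set0.
  apply/negP=> /andP[/imsetP[p _ ->]]; rewrite mem_lift => /and3P[/eqP e1 /eqP e2 _].
  by move: neq; rewrite e1 e2 eqxx.
have -> : [set q | P q] = lift_pair false false @: Sff :|: lift_pair true true @: Stt
                           :|: lift_pair true false @: Stf.
  apply/setP=> q; rewrite (lift_eta q) inE Plift !in_setU !mem_lift.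
  by case: (None \in q.1); case: (None \in q.2); rewrite /= ?orbF.
rewrite !cardsU setIUl !disj // setU0 cards0 !subn0 !card_imset //.
Qed.

End LiftSet.

Lemma setD_subset_setD_nested (T : finType) (A0 A1 G1 G2 : {set T}) : G2 \subset G1 ->
  [&& G1 :\: G2 \subset A0 :\: A1, G2 \subset A0 & A1 \subset G1]
    = (G1 \subset A0) && (A1 \subset G2).
Proof.
move=> s21; apply/and3P/andP => [[/subsetP sD sG2A0 /subsetP sA1G1] | [sG1A0 sA1G2]].
  split; apply/subsetP => x.
    move=> xG1; have [/(subsetP sG2A0) // | xG2] := boolP (x \in G2).
    by have := sD x; rewrite !inE xG2 xG1 => /(_ isT) /andP[].
  move=> xA1; apply: contraT => xG2.
  by have := sD x; rewrite !inE xG2 (sA1G1 x xA1) xA1 => /(_ isT).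
split; last exact: subset_trans sA1G2 s21.
  by rewrite setDSS.
exact: subset_trans s21 sG1A0.
Qed.

Section ConvexExpansion.

Variables (T : finType) (le : rel T).
Hypotheses (le_refl : reflexive le) (le_anti : antisymmetric le) (le_trans : transitive le).
Variables a0 a1 : {set T}.
Hypotheses (fa0 : a0 \in filters le) (fa1 : a1 \in filters le) (sa10 : a1 \subset a0).
Hypothesis dichotomy : forall G, G \in filters le -> (G \subset a0) || (a1 \subset G).

Local Notation lek := (leK le a0 a1).

Lemma leK_Some_None z : lek (Some z) None = (z \notin a0).
Proof.
apply/exists_inP/idP => [[s] | nza0].
  rewrite inE => /andP[nsa0 _] lzs; apply: contra nsa0 => za0.
  exact: filters_upclosed fa0 za0 lzs.
have [s lzs s_max] :=
  exists_maximal le_refl le_anti le_trans (X := [pred t | t \notin a0]) nza0.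
by exists s; rewrite // inE.
Qed.

Lemma leK_None_Some y : lek None (Some y) = (y \in a1).
Proof.
apply/exists_inP/idP => [[s] | ya1].
  by rewrite inE => /andP[sa1 _] lsy; apply: filters_upclosed fa1 sa1 lsy.
(* the minimal elements of [a1] are its maximal elements for the dual order *)
have ge_refl : reflexive (fun u v => le v u) by move=> u; apply: le_refl.
have ge_anti : antisymmetric (fun u v => le v u) by move=> u v; rewrite andbC => /le_anti.
have ge_trans : transitive (fun u v => le v u).
  by move=> u v w luv lwu; apply: le_trans lwu luv.
have [s lsy s_max] :=
  exists_maximal ge_refl ge_anti ge_trans (X := [pred t | t \in a1]) ya1.
by exists s; rewrite // inE.
Qed.

Lemma le_across z y : z \notin a0 -> y \in a1 -> le z y.
Proof.
move=> nza0 ya1; have up_z : [set t | le z t] \in filters le.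
  by apply/filtersP=> x w; rewrite !inE => /le_trans; apply.
case/orP: (dichotomy up_z) => /subsetP sub; last by move: (sub y ya1); rewrite inE.
by move: (sub z); rewrite inE le_refl (negbTE nza0) => /(_ isT).
Qed.

Lemma leK_refl : reflexive lek.
Proof. by case=> [x|] //=; apply: le_refl. Qed.

Lemma leK_anti : antisymmetric lek.
Proof.
case=> [x|] [y|] //; first by move/le_anti ->.
  by rewrite leK_Some_None leK_None_Some => /andP[/negP nxa0 /(subsetP sa10)].
by rewrite leK_Some_None leK_None_Some => /andP[/(subsetP sa10) ya0 /negP].
Qed.

Lemma leK_trans : transitive lek.
Proof.
case=> [y|] [x|] [z|] //; first exact: le_trans.
- rewrite !leK_Some_None => lxy; apply: contra => xa0.
  exact: filters_upclosed fa0 xa0 lxy.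
- by rewrite !leK_None_Some; apply: filters_upclosed.
- by rewrite leK_Some_None leK_None_Some; apply: le_across.
Qed.

Lemma filters_leK b G :
  (lift_set b G \in filters lek) =
  (G \in filters le) && (if b then a1 \subset G else G \subset a0).
Proof.
apply/filtersP/andP => [up | [/filtersP upG sub] [x|] [y|]];
  rewrite ?lift_set_Some ?lift_set_None ?leK_Some_None ?leK_None_Some //.
- split.
    apply/filtersP=> x y xG lxy.
    by rewrite -(lift_set_Some b) (up (Some x)) ?lift_set_Some.
  case: b up => up; apply/subsetP.
    by move=> y ya1; rewrite -(lift_set_Some true) (up None) ?lift_set_None ?leK_None_Some.
  move=> x xG; apply: contraT => nxa0.
  have := up (Some x) None.
  by rewrite lift_set_Some lift_set_None leK_Some_None nxa0 => /(_ xG isT).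
- exact: upG.
- by case: b sub => // /subsetP sub /sub ->.
- by move=> bT; rewrite bT in sub; apply: (subsetP sub).
Qed.

Lemma antichain_leK c D :
  antichain lek (lift_set c D) = antichain le D && (c ==> (D \subset a0 :\: a1)).
Proof.
apply/antichainP/andP => [an | [/antichainP anD /implyP sub] [x|] [y|]];
  rewrite ?lift_set_Some ?lift_set_None ?leK_Some_None ?leK_None_Some //.
- split.
    apply/antichainP=> x y xD yD lxy.
    by move: (an (Some x) (Some y)); rewrite !lift_set_Some => /(_ xD yD lxy) [].
  apply/implyP=> cT; apply/subsetP=> d dD; rewrite inE; apply/andP; split.
    apply/negP=> da1; move: (an None (Some d)).
    by rewrite lift_set_None lift_set_Some leK_None_Some => /(_ cT dD da1).
  apply: contraT => nda0; move: (an (Some d) None).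
  by rewrite lift_set_None lift_set_Some leK_Some_None => /(_ dD cT nda0).
- by move=> xD yD /(anD x y xD yD) ->.
- by move=> xD /sub/subsetP/(_ x xD); rewrite inE => /andP[_ ->].
- by move=> /sub/subsetP sD /sD; rewrite inE => /andP[/negbTE ->].
Qed.

Definition pairs_below k := [set p | boolean_pair le k p && (p.1 \subset a0)].
Definition pairs_above k := [set p | boolean_pair le k p && (a1 \subset p.2)].
Definition pairs_across k :=
  if k is k'.+1 then pairs_below k' :&: pairs_above k' else set0.

Lemma in_pairs_below k p : (p \in pairs_below k) = boolean_pair le k p && (p.1 \subset a0).
Proof. by rewrite [LHS]inE. Qed.

Lemma in_pairs_above k p : (p \in pairs_above k) = boolean_pair le k p && (a1 \subset p.2).
Proof. by rewrite [LHS]inE. Qed.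

Lemma boolean_pair_leK k b1 b2 p :
  boolean_pair lek k (lift_pair b1 b2 p) =
  if b1 then (if b2 then p \in pairs_above k else p \in pairs_across k)
  else ~~ b2 && (p \in pairs_below k).
Proof.
case: p => G1 G2; rewrite /boolean_pair /lift_pair /= !filters_leK lift_set_subset.
rewrite lift_setD antichain_leK card_lift_set.
case: b1; case: b2; rewrite /pairs_across ?in_pairs_below ?in_pairs_above /boolean_pair /=.
- rewrite addn0 andbT; apply/idP/idP.
    by case/and5P=> /andP[-> _] /andP[-> ->] -> -> ->.
  case/andP=> /and5P[-> -> s21 -> ->] sa1G2.
  by rewrite sa1G2 s21 (subset_trans sa1G2 s21).
- case: k => [|k]; first by rewrite addn1 /= !andbF in_set0.
  rewrite addn1 in_setI in_pairs_below in_pairs_above /boolean_pair /= eqSS.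
  apply/idP/idP.
    case/and5P=> /andP[-> sa1G1] /andP[-> sG2a0] s21 /andP[-> sD] ->.
    have /andP[-> ->] : (G1 \subset a0) && (a1 \subset G2).
      by rewrite -setD_subset_setD_nested // sD sG2a0 sa1G1.
    by rewrite s21.
  case/and3P=> /andP[/and5P[-> -> s21 -> ->] sG1a0] _ sa1G2.
  have := setD_subset_setD_nested a0 a1 s21; rewrite sG1a0 sa1G2.
  by case/and3P=> -> -> ->; rewrite s21.
- by rewrite !andbF.
- rewrite addn0 andbT; apply/idP/idP.
    by case/and5P=> /andP[-> ->] /andP[-> _] -> -> ->.
  case/andP=> /and5P[-> -> s21 -> ->] sG1a0.
  by rewrite sG1a0 s21 (subset_trans s21 sG1a0).
Qed.

Lemma boolean_pair_split k G1 G2 :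
  boolean_pair le k (G1, G2) -> (G1 \subset a0) || (a1 \subset G2).
Proof.
case/and5P=> /= fG1 fG2 s21 an _.
have [// | /subsetPn[x xG1 nxa0]] := boolP (G1 \subset a0).
(* it lies between [G2] and [G1], so it is a filter as [G1 :\: G2] is an antichain *)
have fH : G2 :|: (G1 :\: a0) \in filters le.
  by apply: filters_between fG1 fG2 an _ _; rewrite ?subsetUl // subUset s21 subsetDl.
case/orP: (dichotomy fH) => /subsetP sub.
  by have := sub x; rewrite !inE xG1 nxa0 orbT (negbTE nxa0) => /(_ isT).
apply/subsetP=> y ya1; move: (sub y ya1).
by rewrite !inE (subsetP sa10 y ya1) orbF.
Qed.

Lemma qk_convex_expansion k :
  qk (convex_expansion le a0 a1) (@revsub _) k
    = #|pairs_below k| + #|pairs_above k| + #|pairs_across k|.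
Proof.
rewrite /convex_expansion (qk_filters leK_refl leK_anti leK_trans).
exact: card_lift_pairs (boolean_pair_leK k).
Qed.

Lemma qk_filters_split k :
  qk (filters le) (@revsub T) k = #|pairs_below k :|: pairs_above k|.
Proof.
rewrite (qk_filters le_refl le_anti le_trans); apply: eq_card => -[G1 G2].
rewrite [RHS]in_setU in_pairs_below in_pairs_above [LHS]inE -andb_orr.
by case bp: boolean_pair; rewrite //= (boolean_pair_split bp).
Qed.

Lemma qk_cut_interval_split k :
  qk (cut_interval le a0 a1) (@revsub T) k = #|pairs_below k :&: pairs_above k|.
Proof.
rewrite (qk_cut_interval le_refl le_anti le_trans); apply: eq_card => p.
by rewrite [RHS]in_setI in_pairs_below in_pairs_above [LHS]inE; case: boolean_pair.
Qed.

End ConvexExpansion.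

Theorem theorem4 (T : finType) (le : rel T)
  (le_refl : reflexive le) (le_anti : antisymmetric le)
  (le_trans : transitive le) (a0 a1 : {set T}) :
  cutting le a0 a1 ->
  (forall k : nat,
     qk (convex_expansion le a0 a1) (@revsub _) k =
       qk (filters le) (@revsub T) k
       + qk (cut_interval le a0 a1) (@revsub T) k
       + qk_pred (cut_interval le a0 a1) (@revsub T) k) /\
  #|convex_expansion le a0 a1| = #|filters le| + #|cut_interval le a0 a1|.
Proof.
move=> cut; have [fa0 fa1 sa10 _] := cut; have dichotomy := cutting_dichotomy cut.
have qk_cut := qk_cut_interval_split le_refl le_anti le_trans a0 a1.
have qk_L := qk_filters_split le_refl le_anti le_trans sa10 dichotomy.
have qk_LK := qk_convex_expansion le_refl le_anti le_trans fa0 fa1 sa10 dichotomy.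
split=> [k|]; last by rewrite -!qk0_revsub qk_LK qk_L qk_cut cardsUI /= cards0 addn0.
by rewrite qk_LK qk_L qk_cut cardsUI; case: k => [|k]; rewrite /= ?cards0 ?qk_cut.
Qed.
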